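(* Let $q>0$. For every $x\in\mathbb{R}$, $\mathcal{C}os_q x$ and $\mathcal{S}in_q x$ are real numbers and satisfy $-1\le \mathcal{C}os_q x\le 1$ and $-1\le \mathcal{S}in_q x\le1$.
   Context: For $q>0$ let $[k]=1+q+\dots+q^{k-1}$, $[n]!=[1]\cdots[n]$, and let $e_q^z=\sum_{n\ge0} z^n/[n]!$, $E_q^z=\sum_{n\ge0} q^{n(n-1)/2}z^n/[n]!$ be the standard $q$-exponentials, extended meromorphically to $\mathbb{C}$ (for $0<q<1$: $e_q^z=\prod_{k\ge0}(1-(1-q)q^kz)^{-1}$, $E_q^z=\prod_{k\ge0}(1+(1-q)q^kz)$; in general $E_q^z=e_{1/q}^z$; for $q=1$ both are $e^z$); their poles are real. The improved $q$-exponential is $\mathcal{E}_q^z:=e_q^{z/2}E_q^{z/2}$. For real $x$, $\mathcal{S}in_q x=\frac{\mathcal{E}_q^{ix}-\mathcal{E}_q^{-ix}}{2i}$ and $\mathcal{C}os_q x=\frac{\mathcal{E}_q^{ix}+\mathcal{E}_q^{-ix}}{2}$. *)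

From Stdlib Require Import Reals Lra ClassicalEpsilon.
Open Scope R_scope.

Definition C := (R * R)%type.
Definition Re (z : C) : R := fst z.
Definition Im (z : C) : R := snd z.
Definition C0 : C := (0, 0).
Definition C1 : C := (1, 0).
Definition Cadd (z w : C) : C := (fst z + fst w, snd z + snd w).
Definition Csub (z w : C) : C := (fst z - fst w, snd z - snd w).
Definition Cmul (z w : C) : C :=
  (fst z * fst w - snd z * snd w, fst z * snd w + snd z * fst w).
Definition Cscal (r : R) (z : C) : C := (r * fst z, r * snd z).
Definition Cinv (z : C) : C :=
  let d := fst z * fst z + snd z * snd z in (fst z / d, - snd z / d).
Definition Cdiv (z w : C) : C := Cmul z (Cinv w).
Definition Cexp (z : C) : C := (exp (fst z) * cos (snd z), exp (fst z) * sin (snd z)).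

Definition Ccv (u : nat -> C) (L : C) : Prop :=
  Un_cv (fun n => fst (u n)) (fst L) /\ Un_cv (fun n => snd (u n)) (snd L).
Definition Clim (u : nat -> C) : C := epsilon (inhabits C0) (fun L => Ccv u L).

Fixpoint Cprod (f : nat -> C) (N : nat) : C :=
  match N with O => C1 | S n => Cmul (Cprod f n) (f n) end.

(** For 0 < q < 1 (product formulas):
    e_q^z = prod_{k>=0} (1 - (1-q) q^k z)^{-1},
    E_q^z = prod_{k>=0} (1 + (1-q) q^k z). *)
Definition small_e (q : R) (z : C) : C :=
  Clim (fun N => Cinv (Cprod (fun k => Csub C1 (Cscal ((1 - q) * q ^ k) z)) N)).
Definition small_E (q : R) (z : C) : C :=
  Clim (fun N => Cprod (fun k => Cadd C1 (Cscal ((1 - q) * q ^ k) z)) N).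

(** General q > 0: q = 1 gives exp; q > 1 uses E_q = e_{1/q} (hence e_q = E_{1/q}). *)
Definition qexp_e (q : R) (z : C) : C :=
  if Rlt_dec q 1 then small_e q z
  else if Req_EM_T q 1 then Cexp z
  else small_E (/ q) z.
Definition qexp_E (q : R) (z : C) : C :=
  if Rlt_dec q 1 then small_E q z
  else if Req_EM_T q 1 then Cexp z
  else small_e (/ q) z.

Definition qexp_impr (q : R) (z : C) : C :=
  Cmul (qexp_e q (Cscal (/ 2) z)) (qexp_E q (Cscal (/ 2) z)).

Definition Sinq (q x : R) : C :=
  Cdiv (Csub (qexp_impr q (0, x)) (qexp_impr q (0, - x))) (0, 2).
Definition Cosq (q x : R) : C :=
  Cdiv (Cadd (qexp_impr q (0, x)) (qexp_impr q (0, - x))) (2, 0).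

(* For purely imaginary z = i t and 0 < r < 1 the factors 1 + (1-r) r^k z of
   E_r^z and 1 - (1-r) r^k z of 1/e_r^z are complex conjugate, so
   e_r^z = 1/conj(P) and E_r^z = P for the same convergent product P.  Hence
   the improved exponential at i x is P / conj(P), of modulus one, and its value
   at -i x is its conjugate; the same holds for q = 1 (exp) and for q > 1
   (where e_q and E_q swap roles).  Cos_q x and Sin_q x are then the real and
   imaginary parts of a point of the unit circle.  The product converges
   because its factors have the form 1 + i O(r^k): their moduli stay in
   [1, exp (sum O(r^2k))] and the increments of the partial products are
   geometrically small. *)
From Stdlib Require Import Reals Lra Psatz ClassicalEpsilon FunctionalExtensionality.
Open Scope R_scope.

Lemma Un_cv_const (c : R) : Un_cv (fun _ => c) c.
Proof.
  intros e He; exists 0%nat; intros n _.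
  unfold Rdist; rewrite Rminus_diag, Rabs_R0; exact He.
Qed.

Lemma Un_cv_inv (u : nat -> R) (l : R) :
  l <> 0 -> Un_cv u l -> Un_cv (fun n => / u n) (/ l).
Proof.
  intros Hl Hu.
  apply (continuity_seq (inv_fct id)); [|exact Hu].
  apply continuity_pt_inv; [|exact Hl].
  apply derivable_continuous_pt, derivable_pt_id.
Qed.

Lemma Un_cv_of_geometric_increments (v : nat -> R) (D r : R) :
  0 <= r < 1 -> (forall n, Rabs (v (S n) - v n) <= D * r ^ n) ->
  exists l, Un_cv v l.
Proof.
  intros Hr Hv.
  set (d := fun n => v (S n) - v n).
  assert (Hgeom : {l | Un_cv (sum_f_R0 (fun n => D * r ^ n)) l}).
  { exists (D * / (1 - r)).
    apply (Un_cv_ext (fun N => D * sum_f_R0 (fun n => 1 * r ^ n) N)).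
    - intros N; rewrite scal_sum; apply sum_eq; intros; ring.
    - apply CV_mult; [apply Un_cv_const|].
      apply GP_infinite; rewrite Rabs_right; lra. }
  assert (Habs : forall n, 0 <= Rabs (d n) <= D * r ^ n).
  { intros n; split; [apply Rabs_pos | apply Hv]. }
  destruct (cv_cauchy_2 d (cauchy_abs d (cv_cauchy_1 _ (Rseries_CV_comp _ _ Habs Hgeom))))
    as [l Hl].
  exists (v 0%nat + l).
  apply (CV_shift _ 1).
  apply (Un_cv_ext (fun n => v 0%nat + sum_f_R0 d n)).
  - intros n; rewrite Nat.add_1_r; induction n as [|n IH]; simpl; unfold d in *; lra.
  - apply CV_plus; [apply Un_cv_const | exact Hl].
Qed.

Lemma exp_le_compat (a b : R) : a <= b -> exp a <= exp b.
Proof. intros [Hab|Hab]; [left; apply exp_increasing, Hab | rewrite Hab; apply Rle_refl]. Qed.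

Lemma Rabs_mult_self (x : R) : Rabs x * Rabs x = x * x.
Proof. rewrite <- Rabs_mult; apply Rabs_right, Rle_ge, Rle_0_sqr. Qed.

Definition Cnorm2 (z : C) : R := fst z * fst z + snd z * snd z.
Definition Cconj (z : C) : C := (fst z, - snd z).

Lemma Cmul_comm (z w : C) : Cmul z w = Cmul w z.
Proof. unfold Cmul; f_equal; ring. Qed.

Lemma Cconj_involutive (z : C) : Cconj (Cconj z) = z.
Proof. destruct z; unfold Cconj; simpl; rewrite Ropp_involutive; reflexivity. Qed.

Lemma Cconj_mul (z w : C) : Cconj (Cmul z w) = Cmul (Cconj z) (Cconj w).
Proof. unfold Cconj, Cmul; simpl; f_equal; ring. Qed.

Lemma Cconj_inv (z : C) : Cconj (Cinv z) = Cinv (Cconj z).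
Proof.
  unfold Cconj, Cinv; simpl.
  replace (- snd z * - snd z) with (snd z * snd z) by ring.
  f_equal; unfold Rdiv; ring.
Qed.

Lemma Cnorm2_conj (z : C) : Cnorm2 (Cconj z) = Cnorm2 z.
Proof. unfold Cnorm2, Cconj; simpl; ring. Qed.

Lemma Cnorm2_mul (z w : C) : Cnorm2 (Cmul z w) = Cnorm2 z * Cnorm2 w.
Proof. unfold Cnorm2, Cmul; simpl; ring. Qed.

Lemma Cnorm2_inv (z : C) : Cnorm2 z <> 0 -> Cnorm2 (Cinv z) = / Cnorm2 z.
Proof. unfold Cnorm2, Cinv; simpl; intros Hz; field; exact Hz. Qed.

Lemma Rabs_fst_le (z : C) : Rabs (fst z) <= 1 + Cnorm2 z.
Proof.
  unfold Cnorm2; pose proof (Rle_0_sqr (snd z)); unfold Rsqr in *.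
  destruct (Rcase_abs (fst z)); [rewrite Rabs_left | rewrite Rabs_right]; nra.
Qed.

Lemma Rabs_snd_le (z : C) : Rabs (snd z) <= 1 + Cnorm2 z.
Proof.
  unfold Cnorm2; pose proof (Rle_0_sqr (fst z)); unfold Rsqr in *.
  destruct (Rcase_abs (snd z)); [rewrite Rabs_left | rewrite Rabs_right]; nra.
Qed.

Lemma unit_circle_fst (z : C) : Cnorm2 z = 1 -> -1 <= fst z <= 1.
Proof. unfold Cnorm2; pose proof (Rle_0_sqr (snd z)); unfold Rsqr in *; intros; nra. Qed.

Lemma unit_circle_snd (z : C) : Cnorm2 z = 1 -> -1 <= snd z <= 1.
Proof. unfold Cnorm2; pose proof (Rle_0_sqr (fst z)); unfold Rsqr in *; intros; nra. Qed.

Lemma Cdiv_Cadd_Cconj_2 (z : C) : Cdiv (Cadd z (Cconj z)) (2, 0) = (fst z, 0).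
Proof. unfold Cdiv, Cadd, Cconj, Cmul, Cinv; simpl; f_equal; field. Qed.

Lemma Cdiv_Csub_Cconj_2i (z : C) : Cdiv (Csub z (Cconj z)) (0, 2) = (snd z, 0).
Proof. unfold Cdiv, Csub, Cconj, Cmul, Cinv; simpl; f_equal; field. Qed.

Lemma Ccv_Clim (u : nat -> C) (L : C) : Ccv u L -> Clim u = L.
Proof.
  intros HL; unfold Clim.
  destruct (epsilon_spec (inhabits C0) (Ccv u) (ex_intro _ L HL)) as [H1 H2].
  destruct (epsilon (inhabits C0) (Ccv u)) as [a b], L as [c d], HL as [Hc Hd].
  simpl in *; rewrite (UL_sequence _ _ _ H1 Hc), (UL_sequence _ _ _ H2 Hd).
  reflexivity.
Qed.

Lemma Ccv_inv (u : nat -> C) (L : C) :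
  Ccv u L -> Cnorm2 L <> 0 -> Ccv (fun n => Cinv (u n)) (Cinv L).
Proof.
  intros [H1 H2] HL.
  assert (Hd : Un_cv (fun n => / Cnorm2 (u n)) (/ Cnorm2 L)).
  { apply Un_cv_inv; [exact HL|]; apply CV_plus; apply CV_mult; assumption. }
  split; apply CV_mult; try apply CV_opp; assumption.
Qed.

Lemma Cprod_conj (f : nat -> C) (n : nat) :
  Cprod (fun k => Cconj (f k)) n = Cconj (Cprod f n).
Proof.
  induction n as [|n IH]; simpl.
  - unfold Cconj, C1; simpl; rewrite Ropp_0; reflexivity.
  - rewrite IH, Cconj_mul; reflexivity.
Qed.

Lemma Ccv_Cprod_conj (f : nat -> C) (L : C) :
  Ccv (Cprod f) L -> Ccv (Cprod (fun k => Cconj (f k))) (Cconj L).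
Proof.
  intros [H1 H2]; split; simpl.
  - apply (Un_cv_ext (fun n => fst (Cprod f n))); [|exact H1].
    intros n; rewrite Cprod_conj; reflexivity.
  - apply (Un_cv_ext (fun n => - snd (Cprod f n))); [|apply CV_opp; exact H2].
    intros n; rewrite Cprod_conj; reflexivity.
Qed.

Section ProductOfNearlyOneFactors.

Variables (f : nat -> C) (K r : R).
Hypothesis r_range : 0 <= r < 1.
Hypothesis fst_factor : forall k, fst (f k) = 1.
Hypothesis snd_factor_le : forall k, Rabs (snd (f k)) <= K * r ^ k.

Lemma Cnorm2_factor (k : nat) : Cnorm2 (f k) = 1 + snd (f k) * snd (f k).
Proof. unfold Cnorm2; rewrite fst_factor; ring. Qed.

Lemma Cnorm2_factor_le_exp (k : nat) : Cnorm2 (f k) <= exp (K * K * (r * r) ^ k).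
Proof.
  rewrite Cnorm2_factor.
  eapply Rle_trans; [apply exp_ineq1_le|].
  apply exp_le_compat.
  pose proof (snd_factor_le k); pose proof (Rabs_pos (snd (f k))).
  rewrite <- Rabs_mult_self, Rpow_mult_distr; nra.
Qed.

Lemma Cprod_Cnorm2_ge1 (n : nat) : 1 <= Cnorm2 (Cprod f n).
Proof.
  induction n as [|n IH]; simpl.
  - unfold Cnorm2, C1; simpl; lra.
  - rewrite Cnorm2_mul, Cnorm2_factor.
    pose proof (Rle_0_sqr (snd (f n))); unfold Rsqr in *; nra.
Qed.

Lemma Cprod_Cnorm2_le (n : nat) : Cnorm2 (Cprod f n) <= exp (K * K / (1 - r * r)).
Proof.
  set (rho := r * r).
  assert (Hrho : 0 <= rho < 1) by (unfold rho; nra).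
  assert (Hpartial : Cnorm2 (Cprod f n) <= exp (K * K * (1 - rho ^ n) / (1 - rho))).
  { induction n as [|n IH]; simpl.
    - unfold Cnorm2, C1; simpl.
      replace (K * K * (1 - 1) / (1 - rho)) with 0 by (field; lra).
      rewrite exp_0; lra.
    - rewrite Cnorm2_mul.
      replace (K * K * (1 - rho * rho ^ n) / (1 - rho))
        with (K * K * (1 - rho ^ n) / (1 - rho) + K * K * rho ^ n) by (field; lra).
      rewrite exp_plus.
      apply Rmult_le_compat; [pose proof (Cprod_Cnorm2_ge1 n); lra
                             | rewrite Cnorm2_factor; pose proof (Rle_0_sqr (snd (f n)));
                               unfold Rsqr in *; lra
                             | exact IH | apply Cnorm2_factor_le_exp]. }
  eapply Rle_trans; [exact Hpartial|]; apply exp_le_compat.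
  pose proof (pow_le rho n (proj1 Hrho)); pose proof (Rle_0_sqr K); unfold Rsqr in *.
  unfold Rdiv; apply Rmult_le_compat_r; [left; apply Rinv_0_lt_compat; lra | nra].
Qed.

Lemma Cprod_increments_le (n : nat) :
  let M := (1 + exp (K * K / (1 - r * r))) * K in
  Rabs (fst (Cprod f (S n)) - fst (Cprod f n)) <= M * r ^ n /\
  Rabs (snd (Cprod f (S n)) - snd (Cprod f n)) <= M * r ^ n.
Proof.
  intros M; unfold M; simpl; unfold Cmul; simpl; rewrite fst_factor.
  pose proof (Rabs_fst_le (Cprod f n)); pose proof (Rabs_snd_le (Cprod f n)).
  pose proof (Cprod_Cnorm2_le n).
  rewrite Rmult_assoc.
  split.
  - replace (_ * 1 - _ * _ - _) with (- (snd (Cprod f n) * snd (f n))) by ring.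
    rewrite Rabs_Ropp, Rabs_mult.
    apply Rmult_le_compat; auto using Rabs_pos; lra.
  - replace (_ * _ + _ * 1 - _) with (fst (Cprod f n) * snd (f n)) by ring.
    rewrite Rabs_mult.
    apply Rmult_le_compat; auto using Rabs_pos; lra.
Qed.

Lemma Cprod_cv : exists L, Ccv (Cprod f) L /\ 1 <= Cnorm2 L.
Proof.
  destruct (Un_cv_of_geometric_increments (fun n => fst (Cprod f n)) _ r r_range
              (fun n => proj1 (Cprod_increments_le n))) as [l1 Hl1].
  destruct (Un_cv_of_geometric_increments (fun n => snd (Cprod f n)) _ r r_range
              (fun n => proj2 (Cprod_increments_le n))) as [l2 Hl2].
  exists (l1, l2); split; [split; assumption|].
  apply (@Rle_cv_lim (fun _ => 1) (fun n => Cnorm2 (Cprod f n)));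
    [exact Cprod_Cnorm2_ge1 | apply Un_cv_const |].
  apply CV_plus; apply CV_mult; assumption.
Qed.

End ProductOfNearlyOneFactors.

Definition qfactor (r : R) (z : C) (k : nat) : C := Cadd C1 (Cscal ((1 - r) * r ^ k) z).

Lemma qfactor_conj (r : R) (z : C) :
  qfactor r (Cconj z) = (fun k => Cconj (qfactor r z k)).
Proof.
  apply functional_extensionality; intros k.
  unfold qfactor, Cadd, Cscal, Cconj, C1; simpl; f_equal; ring.
Qed.

Lemma Csub_C1_imag (r : R) (z : C) : fst z = 0 ->
  (fun k => Csub C1 (Cscal ((1 - r) * r ^ k) z)) = (fun k => Cconj (qfactor r z k)).
Proof.
  intros Hz; apply functional_extensionality; intros k.
  unfold qfactor, Csub, Cadd, Cscal, Cconj, C1; simpl; rewrite Hz; f_equal; ring.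
Qed.

Lemma Cprod_qfactor_imag_cv (r t : R) : 0 < r < 1 ->
  exists P, Ccv (Cprod (qfactor r (0, t))) P /\ 1 <= Cnorm2 P.
Proof.
  intros Hr; apply (Cprod_cv _ (Rabs t) r); [lra | |].
  - intros k; unfold qfactor, Cadd, Cscal, C1; simpl; ring.
  - intros k; unfold qfactor, Cadd, Cscal, C1; simpl.
    rewrite Rplus_0_l, !Rabs_mult, (Rabs_right (1 - r)), (Rabs_right (r ^ k))
      by (try apply Rle_ge, pow_le; lra).
    pose proof (Rmult_le_pos _ _ (pow_le r k ltac:(lra)) (Rabs_pos t)); nra.
Qed.

Lemma small_qexp_imag (r t : R) : 0 < r < 1 ->
  exists P, Cnorm2 P <> 0 /\
    small_E r (0, t) = P /\ small_e r (0, t) = Cinv (Cconj P) /\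
    small_E r (0, - t) = Cconj P /\ small_e r (0, - t) = Cinv P.
Proof.
  intros Hr.
  destruct (Cprod_qfactor_imag_cv r t Hr) as [P [HP HP1]].
  assert (HP0 : Cnorm2 P <> 0) by lra.
  assert (HPc : Ccv (Cprod (qfactor r (0, - t))) (Cconj P)).
  { change (0, - t) with (Cconj (0, t)); rewrite qfactor_conj.
    apply Ccv_Cprod_conj, HP. }
  exists P; unfold small_E, small_e.
  refine (conj HP0 (conj _ (conj _ (conj _ _)))); apply Ccv_Clim.
  - exact HP.
  - rewrite (Csub_C1_imag r (0, t) eq_refl).
    apply Ccv_inv; [apply Ccv_Cprod_conj, HP | rewrite Cnorm2_conj; exact HP0].
  - exact HPc.
  - rewrite (Csub_C1_imag r (0, - t) eq_refl).
    apply Ccv_inv; [|exact HP0].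
    rewrite <- (Cconj_involutive P); apply Ccv_Cprod_conj, HPc.
Qed.

Lemma Cnorm2_Cinv_Cconj_mul (P : C) : Cnorm2 P <> 0 -> Cnorm2 (Cmul (Cinv (Cconj P)) P) = 1.
Proof.
  intros HP.
  rewrite Cnorm2_mul, Cnorm2_inv, Cnorm2_conj by (rewrite Cnorm2_conj; exact HP).
  field; exact HP.
Qed.

Lemma Cconj_Cinv_Cconj_mul (P : C) : Cconj (Cmul (Cinv (Cconj P)) P) = Cmul (Cinv P) (Cconj P).
Proof. rewrite Cconj_mul, Cconj_inv, Cconj_involutive; reflexivity. Qed.

Lemma Cexp_conj (z : C) : Cexp (Cconj z) = Cconj (Cexp z).
Proof. unfold Cexp, Cconj; simpl; rewrite cos_neg, sin_neg; f_equal; ring. Qed.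

Lemma Cnorm2_Cexp_imag (t : R) : Cnorm2 (Cexp (0, t)) = 1.
Proof.
  unfold Cnorm2, Cexp; simpl; rewrite exp_0.
  pose proof (sin2_cos2 t); unfold Rsqr in *; lra.
Qed.

Lemma qexp_impr_imag (q t : R) : 0 < q ->
  Cnorm2 (qexp_impr q (0, t)) = 1 /\ qexp_impr q (0, - t) = Cconj (qexp_impr q (0, t)).
Proof.
  intros Hq; unfold qexp_impr, qexp_e, qexp_E.
  replace (Cscal (/ 2) (0, t)) with (0, t / 2) by (unfold Cscal; simpl; f_equal; field).
  replace (Cscal (/ 2) (0, - t)) with (0, - (t / 2)) by (unfold Cscal; simpl; f_equal; field).
  set (s := t / 2).
  destruct (Rlt_dec q 1) as [Hq1|Hq1]; [|destruct (Req_EM_T q 1) as [_|Hq1']].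
  - destruct (small_qexp_imag q s ltac:(lra)) as (P & HP & -> & -> & -> & ->).
    split; [apply Cnorm2_Cinv_Cconj_mul, HP | symmetry; apply Cconj_Cinv_Cconj_mul].
  - change (0, - s) with (Cconj (0, s)).
    rewrite Cexp_conj, Cconj_mul, Cnorm2_mul, Cnorm2_Cexp_imag.
    split; [ring | reflexivity].
  - assert (Hr : 0 < / q < 1).
    { split; [apply Rinv_0_lt_compat; lra|].
      rewrite <- Rinv_1; apply Rinv_lt_contravar; lra. }
    destruct (small_qexp_imag (/ q) s Hr) as (P & HP & -> & -> & -> & ->).
    rewrite (Cmul_comm P), (Cmul_comm (Cconj P)).
    split; [apply Cnorm2_Cinv_Cconj_mul, HP | symmetry; apply Cconj_Cinv_Cconj_mul].
Qed.

Theorem corollary4 (q x : R) (hq : 0 < q) :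
  Im (Cosq q x) = 0 /\ Im (Sinq q x) = 0 /\
  -1 <= Re (Cosq q x) <= 1 /\ -1 <= Re (Sinq q x) <= 1.
Proof.
  destruct (qexp_impr_imag q x hq) as [Hunit Hconj].
  unfold Cosq, Sinq; rewrite Hconj, Cdiv_Cadd_Cconj_2, Cdiv_Csub_Cconj_2i.
  unfold Re, Im; cbn [fst snd].
  split; [reflexivity|]; split; [reflexivity|].
  split; [apply unit_circle_fst | apply unit_circle_snd]; exact Hunit.
Qed.
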